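(* Let $n\ge2$ and $1\le s<\ell$ be integers, and consider the saturation SQGT model with thresholds $(1,2,\dots,s)$, in which a test $\mathbf{x}\in\{0,1\}^n$ applied to $\mathbf{b}$ returns $\min(\mathbf{x}\cdot\mathbf{b},s)$. Then there exists a binary test matrix $\mathbf{C}$ with $n$ columns and at most $\frac{2\ell}{s}+2\log_2 n+3$ rows that solves $\mathrm{Burst}(n,\le\ell,\underline{\eta})$, i.e. any two distinct bursts in $\{0,1\}^n$ of lengths between $1$ and $\ell$ yield distinct outcome vectors.
   Context: Items are indexed $0,\dots,n-1$. A burst with head $a$ and tail $t$ ($0\le a\le t\le n-1$) is the vector in $\{0,1\}^n$ whose $j$-th coordinate is $1$ iff $a\le j\le t$; its length is $t-a+1$. $\mathrm{Burst}(n,\le\ell,\underline{\eta})$ is the problem of identifying an unknown burst of length in $\{1,\dots,\ell\}$ from the outcome vector (entrywise outcomes of the rows of the test matrix). *)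

From mathcomp Require Import all_boot.
From Stdlib Require Import Reals.
Unset Printing Implicit Defensive.

Definition burst (n a t : nat) : 'I_n -> bool := fun j => (a <= j) && (j <= t).

Definition is_burst_le (n l : nat) (a t : nat) : bool :=
  [&& a <= t, t < n & t - a + 1 <= l].

Definition sat_outcome (n s : nat) (x b : 'I_n -> bool) : nat :=
  minn (\sum_(j < n) (x j && b j)) s.

Definition outcome_vec (m n s : nat) (C : 'I_m -> 'I_n -> bool) (b : 'I_n -> bool)
  : 'I_m -> nat := fun i => sat_outcome n s (C i) b.

Definition solves_burst (m n l s : nat) (C : 'I_m -> 'I_n -> bool) : Prop :=
  forall a1 t1 a2 t2 : nat,
    is_burst_le n l a1 t1 -> is_burst_le n l a2 t2 ->
    (forall j, burst n a1 t1 j = burst n a2 t2 j) \/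
    exists i, outcome_vec m n s C (burst n a1 t1) i <> outcome_vec m n s C (burst n a2 t2) i.

(* Put q := l %/ s + 1 (so l <= q s), Q := q + 1 and P := Q s.  A burst is the
   window [a, a + L) with 0 < L <= q s < P.  The matrix has four families of rows:
   - Q "class" tests  { j | (j %/ s) mod Q = g }: each class meets any window of
     length <= Q s in at most s positions, so saturation at s is harmless and the
     outcomes give the exact class counts, hence L and the sum of the class
     indices (j %/ s) mod Q over the window;
   - k "low-bit" tests (bit b of j mod s): exact when L < s, they give the sum of
     j mod s over the window;
   - K "block-bit" tests (bit b of the block index j %/ P) and their K
     complements: since a window meets at most two consecutive blocks, their
     positivity pattern reveals, bitwise, the sum of the first and last block
     indices of the window.
   Two windows of equal length with the same observations must have the same
   first and last blocks; a nonzero shift d is then refuted by comparing the d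
   positions entering and leaving the window (lemmas [shifted_window_false] and
   [quotient_shift_false]).  Finally 2 ^ (k + 2K) <= 4 n^2 bounds the number of
   rows. *)

From mathcomp Require Import all_boot.
From Stdlib Require Import Reals Lra.
From mathcomp Require Import zify.
Import ssrnat.

Set Implicit Arguments.
Unset Strict Implicit.

Definition wsum (f : nat -> nat) (a L : nat) : nat := \sum_(i < L) f (a + i).

Definition wcount (t : nat -> bool) (a L : nat) : nat := wsum (fun j => t j) a L.

Lemma wsum_eq (f g : nat -> nat) a b L :
  (forall i, i < L -> f (a + i) = g (b + i)) -> wsum f a L = wsum g b L.
Proof. by move=> fg; apply: eq_bigr => i _; apply: fg. Qed.

Lemma wsum_le (f g : nat -> nat) a b L :
  (forall i, i < L -> f (a + i) <= g (b + i)) -> wsum f a L <= wsum g b L.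
Proof. by move=> fg; apply: leq_sum => i _; apply: fg. Qed.

Lemma wsum_const c a L : wsum (fun=> c) a L = L * c.
Proof. by rewrite /wsum sum_nat_const card_ord. Qed.

Lemma wsum_add (f g : nat -> nat) a L :
  wsum (fun j => f j + g j) a L = wsum f a L + wsum g a L.
Proof. exact: big_split. Qed.

Lemma wsum_mull c (f : nat -> nat) a L : wsum (fun j => c * f j) a L = c * wsum f a L.
Proof. by rewrite /wsum big_distrr. Qed.

Lemma wsum_cat (f : nat -> nat) a L d : wsum f a (L + d) = wsum f a L + wsum f (a + L) d.
Proof. by rewrite /wsum big_split_ord; congr (_ + _); apply: eq_bigr => i _; rewrite addnA. Qed.

Lemma wsum_shift (f : nat -> nat) a d L :
  wsum f (a + d) L + wsum f a d = wsum f a L + wsum f (a + L) d.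
Proof. by rewrite addnC -wsum_cat addnC wsum_cat. Qed.

Lemma wsum_periodic (f : nat -> nat) P a :
  (forall j, f (j + P) = f j) -> wsum f a P = wsum f 0 P.
Proof.
move=> fP; elim: a => // a IHa.
have one b : wsum f b 1 = f b by rewrite /wsum big_ord1 addn0.
by have := wsum_shift f a 1 P; rewrite !one fP addn1 IHa => /addIn.
Qed.

Lemma wcount_le (t : nat -> bool) a L : wcount t a L <= L.
Proof. by rewrite -[leqRHS]muln1 -(wsum_const 1 a L); apply: wsum_le => i _; apply: leq_b1. Qed.

Lemma wcount_gt0_ends (t : nat -> bool) a L : 0 < L ->
  (forall i, i < L -> t (a + i) = t a \/ t (a + i) = t (a + L.-1)) ->
  (0 < wcount t a L) = t a || t (a + L.-1).
Proof.
move=> L_gt0 tE; rewrite lt0n /wcount /wsum sum_nat_eq0 negb_forall.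
apply/existsP/idP => [[i /=] | ].
  by rewrite eqb0 negbK; case: (tE i (ltn_ord i)) => -> ->; rewrite ?orbT.
case/orP=> [ta | tz].
  by exists (Ordinal L_gt0); rewrite /= addn0 ta.
have lastL : L.-1 < L by rewrite prednK.
by exists (Ordinal lastL); rewrite /= tz.
Qed.

Lemma wsum_nat f a L : wsum f a L = \sum_(a <= j < a + L) f j.
Proof.
rewrite -[X in \sum_(X <= _ < _) _]add0n big_addn addnC addnK big_mkord.
by apply: eq_bigr => i _; rewrite addnC.
Qed.

Lemma burst_sum (h : nat -> bool) n a t : a <= t -> t < n ->
  \sum_(j < n) (h j && ((a <= j) && (j <= t))) = wsum (fun j => h j) a (t - a + 1).
Proof.
move=> le_at lt_tn; rewrite wsum_nat (_ : a + _ = t.+1); last by lia.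
rewrite (big_nat_widen _ _ _ _ _ lt_tn) big_geq_mkord.
rewrite [RHS]big_mkcond; apply: eq_bigr => j _; rewrite ltnS.
by case: (h j); case: (a <= j); case: (j <= t).
Qed.

Lemma wsum_classes Q (c w : nat -> nat) a L : (forall j, c j < Q) ->
  wsum (fun j => w (c j)) a L = \sum_(g < Q) w g * wcount (fun j => c j == g) a L.
Proof.
move=> c_lt; rewrite /wcount /wsum.
under [RHS]eq_bigr => g _ do rewrite big_distrr.
rewrite [RHS]exchange_big; apply: eq_bigr => i _ /=.
rewrite (bigD1 (Ordinal (c_lt (a + i)))) //= eqxx muln1 big1 ?addn0 // => g ng.
by rewrite eq_sym -(inj_eq val_inj) /= in ng; rewrite (negbTE ng) muln0.
Qed.

Lemma binary_expansion K x : x < 2 ^ K -> \sum_(i < K) 2 ^ i * odd (x %/ 2 ^ i) = x.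
Proof.
elim: K x => [|K IHK] x x_lt; first by rewrite big_ord0; case: x x_lt.
rewrite big_ord_recl expn0 divn1 mul1n.
have half_lt : x./2 < 2 ^ K by rewrite -divn2 ltn_divLR // -expnSr.
rewrite -[RHS](odd_double_half x) -(IHK _ half_lt) -mul2n big_distrr; congr (_ + _).
by apply: eq_bigr => i _; rewrite /= expnS mulnA -divn2 -divnMA -expnS.
Qed.

Lemma wsum_binary K (w : nat -> nat) a L : (forall i, i < L -> w (a + i) < 2 ^ K) ->
  \sum_(b < K) 2 ^ b * wcount (fun j => odd (w j %/ 2 ^ b)) a L = wsum w a L.
Proof.
move=> w_lt; rewrite /wcount /wsum.
under eq_bigr => b _ do rewrite big_distrr.
by rewrite exchange_big; apply: eq_bigr => i _; apply: binary_expansion; apply: w_lt.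
Qed.

Lemma sum_of_bit_sums K x y x' y' :
  x < 2 ^ K -> y < 2 ^ K -> x' < 2 ^ K -> y' < 2 ^ K ->
  (forall b, b < K ->
     odd (x %/ 2 ^ b) + odd (y %/ 2 ^ b) = odd (x' %/ 2 ^ b) + odd (y' %/ 2 ^ b)) ->
  x + y = x' + y'.
Proof.
move=> x_lt y_lt x'_lt y'_lt bitsE.
rewrite -(binary_expansion x_lt) -(binary_expansion y_lt).
rewrite -(binary_expansion x'_lt) -(binary_expansion y'_lt) -!big_split.
by apply: eq_bigr => b _ /=; rewrite -!mulnDr bitsE.
Qed.

Definition same_outcome (s : nat) (t : nat -> bool) (a L a' L' : nat) : Prop :=
  minn (wcount t a L) s = minn (wcount t a' L') s.

Lemma same_outcome_exact s t a L a' L' :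
  wcount t a L <= s -> wcount t a' L' <= s -> same_outcome s t a L a' L' ->
  wcount t a L = wcount t a' L'.
Proof. by rewrite /same_outcome => /minn_idPl -> /minn_idPl ->. Qed.

Lemma same_outcome_gt0 s t a L a' L' : 0 < s -> same_outcome s t a L a' L' ->
  (0 < wcount t a L) = (0 < wcount t a' L').
Proof. rewrite /same_outcome => s_gt0 E; apply/idP/idP => ?; lia. Qed.

Definition class_test (s Q g : nat) (j : nat) : bool := (j %/ s) %% Q == g.

Lemma class_count_full s Q g V : 0 < s -> V <= Q ->
  wcount (class_test s Q g) 0 (V * s) = s * (g < V).
Proof.
move=> s_gt0; elim: V => [|V IHV] le_VQ.
  by rewrite mul0n /wcount /wsum big_ord0 ltn0 muln0.
rewrite mulSn addnC /wcount wsum_cat -/(wcount _ _ _) IHV ?(ltnW le_VQ) //.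
rewrite (@wsum_eq _ (fun=> nat_of_bool (V == g)) _ 0); last first.
  by move=> i lt_is; rewrite /class_test add0n divnMDl // divn_small // addn0 modn_small.
rewrite wsum_const -mulnDr; congr (_ * _).
have -> : (g < V.+1) = (g < V) || (V == g) by rewrite ltnS leq_eqVlt orbC eq_sym.
by case: eqP => [->|_]; rewrite ?ltnn ?addn0 ?orbF.
Qed.

Lemma class_count_le s Q g a L : 0 < s -> g < Q -> L <= Q * s ->
  wcount (class_test s Q g) a L <= s.
Proof.
move=> s_gt0 lt_gQ le_L.
have periodic j : nat_of_bool (class_test s Q g (j + Q * s)) = class_test s Q g j.
  by rewrite /class_test divnDMl // modnDr.
apply: (@leq_trans (wcount (class_test s Q g) a (Q * s))).
  by rewrite /wcount -(subnKC le_L) wsum_cat leq_addr.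
by rewrite /wcount wsum_periodic // -/(wcount _ _ _) class_count_full // lt_gQ muln1.
Qed.

(* Identical class outcomes give identical sums of any weight of the class
   index; with weights 1 and id this yields the length and the index sum. *)
Lemma class_sums s Q (w : nat -> nat) a L a' L' : 0 < s -> L <= Q * s -> L' <= Q * s ->
  (forall g, g < Q -> same_outcome s (class_test s Q g) a L a' L') ->
  wsum (fun j => w ((j %/ s) %% Q)) a L = wsum (fun j => w ((j %/ s) %% Q)) a' L'.
Proof.
move=> s_gt0 le_L le_L' same.
case: (posnP Q) => [Q0 | Q_gt0].
  by move: le_L le_L'; rewrite Q0 !leqn0 => /eqP-> /eqP->; rewrite /wsum !big_ord0.
have lt_Q j : (j %/ s) %% Q < Q by rewrite ltn_mod.
rewrite !(wsum_classes w _ _ lt_Q); apply: eq_bigr => g _; congr (_ * _).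
by apply: same_outcome_exact (same g _); rewrite ?class_count_le.
Qed.

Definition block_bit_test (P b : nat) (j : nat) : bool := odd (j %/ P %/ 2 ^ b).

Lemma last_block_bounds P a L : 0 < L <= P ->
  a %/ P <= (a + L.-1) %/ P <= a %/ P + 1.
Proof.
case/andP=> L_gt0 le_LP; have P_gt0 : 0 < P by apply: leq_trans le_LP.
rewrite leq_div2r ?leq_addr //= -(divnDMl 1 a P_gt0) mul1n leq_div2r //; lia.
Qed.

Lemma window_two_blocks P a L i : 0 < L <= P -> i < L ->
  (a + i) %/ P = a %/ P \/ (a + i) %/ P = (a + L.-1) %/ P.
Proof.
move=> L_P lt_iL; have /andP[first_le last_le] := last_block_bounds a L_P.
have lo : a %/ P <= (a + i) %/ P by apply: leq_div2r; rewrite leq_addr.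
have hi : (a + i) %/ P <= (a + L.-1) %/ P by apply: leq_div2r; lia.
lia.
Qed.

Lemma wcount_blockwise (f : nat -> bool) P a L : 0 < L <= P ->
  (0 < wcount (fun j => f (j %/ P)) a L) = f (a %/ P) || f ((a + L.-1) %/ P).
Proof.
move=> L_P; have /andP[L_gt0 _] := L_P.
apply: wcount_gt0_ends L_gt0 _ => i lt_iL.
by case: (window_two_blocks a L_P lt_iL) => ->; [left | right].
Qed.

Lemma or_pair_sum (x y x' y' : bool) :
  x || y = x' || y' -> ~~ x || ~~ y = ~~ x' || ~~ y' -> x + y = x' + y'.
Proof. by case: x; case: y; case: x'; case: y'. Qed.

Lemma block_index_sum s P K a L a' L' : 0 < s -> 0 < L <= P -> 0 < L' <= P ->
  (a + L.-1) %/ P < 2 ^ K -> (a' + L'.-1) %/ P < 2 ^ K ->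
  (forall b, b < K -> same_outcome s (block_bit_test P b) a L a' L' /\
                      same_outcome s (fun j => ~~ block_bit_test P b j) a L a' L') ->
  a %/ P + (a + L.-1) %/ P = a' %/ P + (a' + L'.-1) %/ P.
Proof.
move=> s_gt0 L_P L'_P last_lt last'_lt same.
have first_lt c M : (c + M.-1) %/ P < 2 ^ K -> c %/ P < 2 ^ K.
  by apply: leq_ltn_trans; apply: leq_div2r; apply: leq_addr.
apply: sum_of_bit_sums (first_lt _ _ last_lt) last_lt (first_lt _ _ last'_lt) last'_lt _.
move=> b lt_bK; have [same_bit same_nbit] := same b lt_bK.
apply: or_pair_sum.
- have := same_outcome_gt0 s_gt0 same_bit.
  by rewrite /block_bit_test (wcount_blockwise (fun u => odd (u %/ 2 ^ b))) //
    (wcount_blockwise (fun u => odd (u %/ 2 ^ b))).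
- have := same_outcome_gt0 s_gt0 same_nbit.
  by rewrite /block_bit_test (wcount_blockwise (fun u => ~~ odd (u %/ 2 ^ b))) //
    (wcount_blockwise (fun u => ~~ odd (u %/ 2 ^ b))).
Qed.

Definition low_bit_test (s b : nat) (j : nat) : bool := odd ((j %% s) %/ 2 ^ b).

Lemma low_sums s n k a a' L : L < s -> a + L <= n -> a' + L <= n -> minn s n <= 2 ^ k ->
  (forall b, b < k -> same_outcome s (low_bit_test s b) a L a' L) ->
  wsum (fun j => j %% s) a L = wsum (fun j => j %% s) a' L.
Proof.
move=> lt_Ls inside inside' low_bits same.
have s_gt0 : 0 < s by apply: leq_ltn_trans lt_Ls.
have mod_lt j : j < n -> j %% s < 2 ^ k.
  move=> lt_jn; apply: leq_trans low_bits; rewrite leq_min ltn_mod s_gt0 /=.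
  by apply: leq_ltn_trans lt_jn; apply: leq_mod.
rewrite -(@wsum_binary k) => [|i lt_iL]; last by apply: mod_lt; lia.
rewrite -(@wsum_binary k) => [|i lt_iL]; last by apply: mod_lt; lia.
apply: eq_bigr => b _; congr (_ * _).
apply: same_outcome_exact (same b (ltn_ord b));
  by apply: leq_trans (wcount_le _ _ _) (ltnW lt_Ls).
Qed.

Lemma block_sums_shift P a d L : 0 < L <= P ->
  a %/ P = (a + d) %/ P -> (a + L.-1) %/ P = (a + d + L.-1) %/ P ->
  wsum (fun j => j %/ P) (a + d) L + d * (a %/ P) =
  wsum (fun j => j %/ P) a L + d * ((a + L.-1) %/ P).
Proof.
case/andP=> L_gt0 _ same_first same_last.
have head : wsum (fun j => j %/ P) a d = d * (a %/ P).
  rewrite -(wsum_const _ a d); apply: wsum_eq => i lt_id; apply/eqP.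
  rewrite eqn_leq {1}same_first !leq_div2r //; first exact: leq_addr.
  by rewrite leq_add2l ltnW.
have tail : wsum (fun j => j %/ P) (a + L) d = d * ((a + L.-1) %/ P).
  rewrite -(wsum_const _ (a + L) d); apply: wsum_eq => i lt_id; apply/eqP.
  rewrite eqn_leq {1}same_last !leq_div2r //; move: L_gt0 lt_id; clear; lia.
by rewrite -head -tail wsum_shift.
Qed.

(* If the run indices j %/ s of the d entering and d leaving positions have
   the same sum, the shift is impossible: for L >= s each entering index
   exceeds the leaving one, and for L < s equal offset sums would force equal
   position sums, contradicting the shift by d L. *)
Lemma quotient_shift_false s a d L : 0 < s -> 0 < d -> 0 < L ->
  wsum (fun j => j %/ s) (a + L) d = wsum (fun j => j %/ s) a d ->
  (L < s -> wsum (fun j => j %% s) a L = wsum (fun j => j %% s) (a + d) L) -> False.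
Proof.
move=> s_gt0 d_gt0 L_gt0 same_quot same_rem.
have [le_sL | lt_Ls] := leqP s L.
  have : wsum (fun j => j %/ s + 1) a d <= wsum (fun j => j %/ s) (a + L) d.
    apply: wsum_le => i _; rewrite addnAC -(divnDMl 1 _ s_gt0) mul1n.
    by apply: leq_div2r; rewrite leq_add2l.
  by rewrite wsum_add wsum_const same_quot muln1; lia.
have same_rem_enter : wsum (fun j => j %% s) (a + L) d = wsum (fun j => j %% s) a d.
  by have := wsum_shift (fun j => j %% s) a d L; rewrite same_rem //; lia.
have euclid b :
    wsum (fun j => j) b d = s * wsum (fun j => j %/ s) b d + wsum (fun j => j %% s) b d.
  by rewrite -wsum_mull -wsum_add; apply: wsum_eq => i _; rewrite mulnC -divn_eq.
have shifted : wsum (fun j => j) (a + L) d = wsum (fun j => j + L) a d.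
  by apply: wsum_eq => i _; rewrite addnAC.
move: shifted; rewrite wsum_add wsum_const !euclid same_quot same_rem_enter; lia.
Qed.

(* The core of the decoding: windows [a, a + L) and [a + d, a + d + L) with
   d > 0, the same first and last blocks and the same class-index sums (and
   offset sums when L < s) cannot exist.  Writing j %/ s = Q (j %/ P) + class,
   the entering positions would carry Q d more run index than the leaving ones
   if the last block were one beyond the first, which exceeds the bound d q;
   otherwise [quotient_shift_false] applies. *)
Lemma shifted_window_false s q a d L : 0 < s -> 0 < d -> 0 < L -> L <= q * s ->
  a %/ (q.+1 * s) = (a + d) %/ (q.+1 * s) ->
  (a + L.-1) %/ (q.+1 * s) = (a + d + L.-1) %/ (q.+1 * s) ->
  wsum (fun j => (j %/ s) %% q.+1) a L = wsum (fun j => (j %/ s) %% q.+1) (a + d) L ->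
  (L < s -> wsum (fun j => j %% s) a L = wsum (fun j => j %% s) (a + d) L) -> False.
Proof.
move=> s_gt0 d_gt0 L_gt0 le_L same_first same_last same_class same_rem.
set P := q.+1 * s; set u := a %/ P; set v := (a + L.-1) %/ P.
have L_P : 0 < L <= P by rewrite L_gt0 (leq_trans le_L) // leq_mul2r leqnSn orbT.
have /andP[u_le_v v_le_u1] := last_block_bounds a L_P.
have blocks := block_sums_shift L_P same_first same_last.
have euclid b : wsum (fun j => j %/ s) b L =
    q.+1 * wsum (fun j => j %/ P) b L + wsum (fun j => (j %/ s) %% q.+1) b L.
  rewrite -wsum_mull -wsum_add; apply: wsum_eq => i _.
  rewrite {1}(divn_eq ((b + i) %/ s) q.+1) -divnMA.
  by rewrite [s * _]mulnC [_ * q.+1]mulnC /P.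
have window_move := wsum_shift (fun j => j %/ s) a d L.
have enter_le : wsum (fun j => j %/ s) (a + L) d <= wsum (fun j => j %/ s + q) a d.
  apply: wsum_le => i _; rewrite addnAC -divnDMl //.
  by apply: leq_div2r; rewrite leq_add2l.
rewrite wsum_add wsum_const mulnC in enter_le.
apply: (quotient_shift_false s_gt0 d_gt0 L_gt0 _ same_rem).
move: window_move; rewrite !euclid -same_class.
move: blocks enter_le u_le_v v_le_u1; rewrite -/u -/v; clearbody u v.
move: (wsum (fun j => (j %/ s) %% q.+1) a L) => C.
move: (wsum _ a L) (wsum _ (a + d) L) (wsum _ a d) (wsum _ (a + L) d) => B B' W W'.
clear -d_gt0 => blocks enter_le u_le_v v_le_u1 window_move.
have [v_eq | v_eq] : v = u \/ v = u + 1 by lia.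
  rewrite v_eq in blocks; have B_eq : B' = B by lia.
  by rewrite B_eq in window_move; lia.
rewrite v_eq mulnDr muln1 in blocks; have B_eq : B' = B + d by lia.
by rewrite B_eq in window_move; lia.
Qed.

Definition test (s Q : nat) (c : nat * nat) : nat -> bool :=
  match c.1 with
  | 0 => class_test s Q c.2
  | 1 => low_bit_test s c.2
  | 2 => block_bit_test (Q * s) c.2
  | _ => fun j => ~~ block_bit_test (Q * s) c.2 j
  end.

Definition test_codes (Q k K : nat) : seq (nat * nat) :=
  [seq (0, g) | g <- iota 0 Q] ++ [seq (1, b) | b <- iota 0 k] ++
  [seq (2, b) | b <- iota 0 K] ++ [seq (3, b) | b <- iota 0 K].

Lemma size_test_codes Q k K : size (test_codes Q k K) = Q + (k + (K + K)).
Proof. by rewrite /test_codes !size_cat !size_map !size_iota. Qed.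

Lemma decode_window s q n k K a L a' L' :
  0 < s -> minn s n <= 2 ^ k -> n.-1 %/ (q.+1 * s) < 2 ^ K ->
  0 < L <= q * s -> 0 < L' <= q * s -> a + L <= n -> a' + L' <= n -> a <= a' ->
  (forall c, c \in test_codes q.+1 k K -> same_outcome s (test s q.+1 c) a L a' L') ->
  a = a' /\ L = L'.
Proof.
move=> s_gt0 low_bits block_bits /andP[L_gt0 le_L] /andP[L'_gt0 le_L'].
move=> inside inside' le_aa' same.
have [d def_a'] : exists d, a' = a + d by exists (a' - a); rewrite subnKC.
subst a'; set P := q.+1 * s.
have le_qQ : q * s <= P by rewrite leq_mul2r leqnSn orbT.
have same_class g : g < q.+1 -> same_outcome s (class_test s q.+1 g) a L (a + d) L'.
  by move=> lt_g; apply: (same (0, g)); rewrite !mem_cat map_f ?mem_iota.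
have class_eq w :=
  class_sums w s_gt0 (leq_trans le_L le_qQ) (leq_trans le_L' le_qQ) same_class.
have L_eq : L = L'.
  by have := class_eq (fun=> 1); rewrite !wsum_const !muln1.
subst L'; split => //.
have last_lt c : c + L <= n -> (c + L.-1) %/ P < 2 ^ K.
  move=> in_c; apply: leq_ltn_trans block_bits; apply: leq_div2r.
  by move: in_c L_gt0; clear; lia.
have L_P : 0 < L <= P by rewrite L_gt0 (leq_trans le_L le_qQ).
have blocks : a %/ P + (a + L.-1) %/ P = (a + d) %/ P + (a + d + L.-1) %/ P.
  apply: (block_index_sum s_gt0 L_P L_P (last_lt a inside) (last_lt _ inside')).
  move=> b lt_bK; split.
    by apply: (same (2, b)); rewrite !mem_cat (map_f (pair 2)) ?orbT // mem_iota.
  by apply: (same (3, b)); rewrite !mem_cat (map_f (pair 3)) ?orbT // mem_iota.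
have first_le : a %/ P <= (a + d) %/ P by apply: leq_div2r; rewrite leq_addr.
have last_le : (a + L.-1) %/ P <= (a + d + L.-1) %/ P.
  by apply: leq_div2r; rewrite leq_add2r leq_addr.
have [first_eq last_eq] : a %/ P = (a + d) %/ P /\ (a + L.-1) %/ P = (a + d + L.-1) %/ P.
  by move: blocks first_le last_le; clear; lia.
case: (posnP d) => [-> | d_gt0]; first by rewrite addn0.
exfalso; apply: (shifted_window_false s_gt0 d_gt0 L_gt0 le_L first_eq last_eq).
  exact: (class_eq (fun x => x)).
move=> lt_Ls; apply: (low_sums lt_Ls inside inside' low_bits) => b lt_bk.
by apply: (same (1, b)); rewrite !mem_cat (map_f (pair 1)) ?orbT // mem_iota.
Qed.

Lemma bursts_separated s q n k K l a t a' t' :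
  0 < s -> minn s n <= 2 ^ k -> n.-1 %/ (q.+1 * s) < 2 ^ K -> l <= q * s ->
  is_burst_le n l a t -> is_burst_le n l a' t' ->
  (forall c, c \in test_codes q.+1 k K ->
     same_outcome s (test s q.+1 c) a (t - a + 1) a' (t' - a' + 1)) ->
  a = a' /\ t = t'.
Proof.
move=> s_gt0 low_bits block_bits le_l.
wlog le_aa' : a t a' t' / a <= a' => [sym bt bt' same | ].
  case: (leqP a a') => [le_aa' | /ltnW le_a'a]; first exact: sym.
  by have [-> ->] := sym a' t' a t le_a'a bt' bt (fun c c_in => esym (same c c_in)).
case/and3P=> le_at lt_tn len; case/and3P=> le_at' lt_tn' len' same.
have window_ok c u : c <= u -> u < n -> u - c + 1 <= l ->
    0 < u - c + 1 <= q * s /\ c + (u - c + 1) <= n.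
  move=> le_cu lt_un len_cu; split; last by move: le_cu lt_un; clear; lia.
  by rewrite (leq_trans len_cu le_l) addn1.
have [L_ok inside] := window_ok a t le_at lt_tn len.
have [L'_ok inside'] := window_ok a' t' le_at' lt_tn' len'.
have [a_eq L_eq] :=
  decode_window s_gt0 low_bits block_bits L_ok L'_ok inside inside' le_aa' same.
by split => //; move: L_eq le_at le_at'; rewrite a_eq; clear; lia.
Qed.

Definition test_matrix (n s Q k K : nat) : 'I_(size (test_codes Q k K)) -> 'I_n -> bool :=
  fun i j => test s Q (nth (0, 0) (test_codes Q k K) i) j.
Arguments test_matrix : clear implicits.

Lemma sat_outcome_burst n s (t : nat -> bool) a b : a <= b -> b < n ->
  sat_outcome n s (fun j : 'I_n => t j) (burst n a b) = minn (wcount t a (b - a + 1)) s.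
Proof. by move=> le_ab lt_bn; rewrite /sat_outcome /burst burst_sum. Qed.

Lemma test_matrix_solves n s q k K l :
  0 < s -> minn s n <= 2 ^ k -> n.-1 %/ (q.+1 * s) < 2 ^ K -> l <= q * s ->
  solves_burst (size (test_codes q.+1 k K)) n l s (test_matrix n s q.+1 k K).
Proof.
move=> s_gt0 low_bits block_bits le_l a t a' t' bt bt'.
set C := test_matrix n s q.+1 k K.
case: (boolP [forall i,
  outcome_vec _ n s C (burst n a t) i == outcome_vec _ n s C (burst n a' t') i]).
  move/forallP=> same; left.
  suff [-> ->] : a = a' /\ t = t' by [].
  apply: (bursts_separated s_gt0 low_bits block_bits le_l bt bt') => c c_in.
  have i_lt : index c (test_codes q.+1 k K) < size (test_codes q.+1 k K).
    by rewrite index_mem.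
  move: (same (Ordinal i_lt)); rewrite /outcome_vec /C /test_matrix /= nth_index //.
  case/and3P: bt => le_at lt_tn _; case/and3P: bt' => le_at' lt_tn' _.
  by rewrite !sat_outcome_burst // => /eqP.
by move/forallPn=> [i /eqP differ]; right; exists i.
Qed.

Lemma up_log2_lt m : 0 < m -> 2 ^ up_log 2 m < 2 * m.
Proof.
move=> m_gt0; case: (ltngtP m 1) => [| m_gt1 | ->]; last by rewrite up_log1.
  by case: m m_gt0.
have lg_gt0 : 0 < up_log 2 m by rewrite up_log_gt0 m_gt1.
by rewrite -(prednK lg_gt0) expnS ltn_mul2l up_log_gtn.
Qed.

(* The bit widths satisfy 2 ^ (k + 2K) <= 4 n^2 when the block length P is at
   least 3 s: with D := (n - 1) %/ P we have 2 ^ k < 2 s and, for D > 0,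
   2 ^ K <= 3 D, while 3 s D <= n. *)
Lemma bit_budget n s P : 0 < n -> 0 < s -> 3 * s <= P ->
  2 ^ (up_log 2 (minn s n) + (up_log 2 (n.-1 %/ P).+1 + up_log 2 (n.-1 %/ P).+1))
    <= 4 * n ^ 2.
Proof.
move=> n_gt0 s_gt0 le_3s_P.
have x_lt : 2 ^ up_log 2 (minn s n) < 2 * minn s n.
  by rewrite up_log2_lt // leq_min s_gt0.
have x_le : minn s n <= s /\ minn s n <= n by rewrite geq_minl geq_minr.
have DP : n.-1 %/ P * P <= n.-1 := leq_divM _ _.
rewrite !expnD; move: (2 ^ _) x_lt => x x_lt.
case: (posnP (n.-1 %/ P)) => [-> | D_gt0].
  by rewrite up_log1 expn0 !muln1; move: x_lt x_le n_gt0; clear; nia.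
have y_lt := up_log2_lt (ltn0Sn (n.-1 %/ P)).
move: (n.-1 %/ P) (2 ^ _) DP D_gt0 y_lt => D y DP D_gt0 y_lt.
have y_le : y <= 3 * D by move: y_lt D_gt0; clear; lia.
have x_le2 : x <= 2 * s by move: x_lt x_le; clear; lia.
have sD : 3 * s * D <= n.
  apply: leq_trans (leq_mul le_3s_P (leqnn D)) _; rewrite mulnC; move: DP n_gt0; clear; lia.
have D_le : 3 * D <= n by apply: leq_trans sD; rewrite leq_mul2r leq_pmulr ?orbT.
(* 2^k 2^K 2^K <= 2 s (3 D) (3 D) = 2 (3 s D) (3 D) <= 2 n n. *)
apply: leq_trans (leq_mul x_le2 (leq_mul y_le y_le)) _.
have -> : 2 * s * (3 * D * (3 * D)) = 2 * (3 * s * D) * (3 * D) by clear; lia.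
apply: leq_trans (leq_mul (leq_mul (leqnn 2) sD) D_le) _.
by rewrite -mulnA expnS expn1 leq_mul2r orbC.
Qed.

Lemma INR_expn m e : INR (m ^ e) = (INR m ^ e)%R.
Proof. by elim: e => [|e IHe] //; rewrite expnS -multE mult_INR IHe. Qed.

Lemma log2_bound e n : (2 ^ e <= 4 * n ^ 2)%N -> (0 < n)%N ->
  (INR e <= 2 + 2 * (ln (INR n) / ln 2))%R.
Proof.
move=> budget n_gt0.
have n_pos : (0 < INR n)%R by apply: lt_0_INR; apply/ltP.
have ln2_pos : (0 < ln 2)%R by rewrite -ln_1; apply: ln_increasing; lra.
have ln_le x y : (0 < x -> x <= y -> ln x <= ln y)%R.
  move=> x_pos /Rle_lt_or_eq_dec [lt_xy | ->]; last exact: Rle_refl.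
  by apply: Rlt_le; apply: ln_increasing.
have two : INR 2 = 2%R by simpl; lra.
have le_real : (2 ^ e <= 2 ^ 2 * INR n ^ 2)%R.
  have four : INR 4 = (2 ^ 2)%R by simpl; lra.
  by have := le_INR _ _ (elimT leP budget); rewrite -multE mult_INR !INR_expn two four.
have := ln_le _ _ (pow_lt 2 e ltac:(lra)) le_real.
rewrite ln_mult ?ln_pow; try (apply: pow_lt); try lra.
rewrite two => ln_ineq; apply: (Rmult_le_reg_r (ln 2)) => //.
rewrite Rmult_plus_distr_r Rmult_assoc Rdiv_def Rmult_assoc Rinv_l ?Rmult_1_r; lra.
Qed.

Lemma row_count_bound n s l e : (0 < n)%N -> (0 < s)%N -> (s < l)%N ->
  (2 ^ e <= 4 * n ^ 2)%N ->
  (INR ((l %/ s).+2 + e) <= 2 * INR l / INR s + 2 * (ln (INR n) / ln 2) + 3)%R.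
Proof.
move=> n_gt0 s_gt0 lt_sl budget.
have log_e := log2_bound budget n_gt0.
have s_pos : (0 < INR s)%R by apply: lt_0_INR; apply/ltP.
have ratio_gt1 : (1 < INR l / INR s)%R.
  apply: (Rmult_lt_reg_r (INR s)) => //; rewrite Rmult_1_l Rdiv_def Rmult_assoc Rinv_l; last lra.
  by rewrite Rmult_1_r; apply: lt_INR; apply/ltP.
have quot_le : (INR (l %/ s) <= INR l / INR s)%R.
  apply: (Rmult_le_reg_r (INR s)) => //; rewrite Rdiv_def Rmult_assoc Rinv_l; last lra.
  by rewrite Rmult_1_r -mult_INR; apply: le_INR; apply/leP; apply: leq_divM.
rewrite plus_INR !S_INR Rdiv_def Rmult_assoc -Rdiv_def; lra.
Qed.

Theorem mainTheorem10 (n s l : nat) :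
  (2 <= n)%N -> (1 <= s)%N -> (s < l)%N ->
  exists (m : nat) (C : 'I_m -> 'I_n -> bool),
    (INR m <= 2 * INR l / INR s + 2 * (ln (INR n) / ln 2) + 3)%R /\
    solves_burst m n l s C.
Proof.
move=> n_ge2 s_gt0 lt_sl.
(* q s exceeds l, k bits cover offsets j mod s and K bits block indices j %/ P. *)
set q := (l %/ s).+1; set P := q.+1 * s.
set k := up_log 2 (minn s n); set K := up_log 2 (n.-1 %/ P).+1.
exists (size (test_codes q.+1 k K)), (test_matrix n s q.+1 k K); split.
  rewrite size_test_codes; apply: row_count_bound => //; first exact: ltnW.
  apply: bit_budget => //; first exact: ltnW.
  by rewrite leq_mul2r !ltnS divn_gt0 // ltnW ?orbT.
apply: test_matrix_solves => //; try exact: up_logP.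
exact/ltnW/ltn_ceil.
Qed.
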